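(* Let $\Gamma$ be an abstract cache and $\varrho$ an abstract environment. If $\Gamma,\varrho\models e$ and $e\to_n e'$ (labelled evaluation at stage $n$), then $\Gamma,\varrho\models e'$.
   Context: **Labelled SLamJS.** Constants $k ::= \mathsf{undef}\mid\mathsf{null}\mid\mathsf{true}\mid\mathsf{false}\mid s\mid n$ ($s$ string, $n$ number); $x$ ranges over names, $\mathfrak m$ over markers, $\ell$ over a set $\mathrm{Label}$. Expressions are labelled terms $e ::= t^\ell$, with terms $t ::= k\mid\{s_1:e_1,\dots,s_j:e_j\}\mid x\mid\mathsf{fun}(x)\{e\}\mid e(e)\mid\mathsf{box}\,e\mid\mathsf{unbox}\,e\mid\mathsf{run}\,e\mid\mathsf{if}(e)\{e\}\mathsf{else}\{e\}\mid e[e]\mid e[e]=e\mid\mathsf{del}\,e[e]\mid(t,\rho)\mid\mathsf{run}\,e\,\mathsf{in}\,\rho\mid(\mathfrak m:e)$; environments $\rho$ map finitely many names to stage-0 values. $\mathrm{lbl}(t^\ell)=\ell$; for $e=t^\ell$, $e^{\ell'}$ means $t^{\ell'}$ and $(e,\rho)^{\ell'}$ means $(t,\rho)^{\ell'}$. Values are labelled expressions whose terms are: at stage 0 closures $(\mathsf{fun}(x)\{e\},\rho)$; at every stage $n$: constants, records of stage-$n$ values, $\mathsf{box}\,v^{n+1}$, $(\mathfrak m:v^n)$; at stages $n+1$ additionally $x$, $\mathsf{fun}(x)\{v^{n+1}\}$, $v^{n+1}(v^{n+1})$, $\mathsf{run}\,v^{n+1}$, $\mathsf{if}(v^{n+1})\{v^{n+1}\}\mathsf{else}\{v^{n+1}\}$,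 $v^{n+1}[v^{n+1}]$, $v^{n+1}[v^{n+1}]=v^{n+1}$, $\mathsf{del}\,v^{n+1}[v^{n+1}]$; at stages $n+2$ additionally $\mathsf{unbox}\,v^{n+1}$. $\pi$ denotes the string ''__proto__''. **Labelled top-level reduction** $\dashrightarrow_n$: Environment propagation: $(k,\rho)^\ell\dashrightarrow_n k^\ell$; $(\{\overline{s:t^\ell}\},\rho)^{\ell'}\dashrightarrow_n\{\overline{s:(t,\rho)^\ell}\}^{\ell'}$; $(x,\rho)^\ell\dashrightarrow_{n+1}x^\ell$; $(\mathsf{fun}(x)\{t^\ell\},\rho)^{\ell'}\dashrightarrow_{n+1}(\mathsf{fun}(x)\{(t,\rho)^\ell\})^{\ell'}$; $(t_1^{\ell_1}(t_2^{\ell_2}),\rho)^\ell\dashrightarrow_n((t_1,\rho)^{\ell_1}((t_2,\rho)^{\ell_2}))^\ell$; $(\mathsf{box}\,t^\ell,\rho)^{\ell'}\dashrightarrow_n(\mathsf{box}\,(t,\rho)^\ell)^{\ell'}$; same for $\mathsf{unbox}$; $(\mathsf{run}\,t^\ell,\rho)^{\ell'}\dashrightarrow_0(\mathsf{run}\,(t,\rho)^\ell\,\mathsf{in}\,\rho)^{\ell'}$; $(\mathsf{run}\,t^\ell,\rho)^{\ell'}\dashrightarrow_{n+1}(\mathsf{run}\,(t,\rho)^\ell)^{\ell'}$; for $\mathsf{if}$, $[\cdot]$, $[\cdot]=\cdot$, $\mathsf{del}$ and $(\mathfrak m:\cdot)$ the environment is pushed to every immediate subexpression $t_i^{\ell_i}\mapsto(t_i,\rho)^{\ell_i}$,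 keeping the outer label, at every stage $n$. Proper rules: (Lookup) $(x,\rho)^\ell\dashrightarrow_0 v^\ell$ where $\rho(x)=v$; (Apply) $((\mathsf{fun}(x)\{t^{\ell_1}\},\rho)^{\ell_2}(v))^{\ell_3}\dashrightarrow_0(t,\rho[x\mapsto v])^{\ell_1}$; (Unbox) $(\mathsf{unbox}\,(\mathsf{box}\,v^1)^{\ell_1})^{\ell_2}\dashrightarrow_1(v^1)^{\ell_2}$; (Run) $(\mathsf{run}\,(\mathsf{box}\,v^1)^{\ell_1}\,\mathsf{in}\,\rho)^{\ell_2}\dashrightarrow_0(v^1,\rho)^{\ell_2}$; (IfTrue/IfFalse) $(\mathsf{if}(\mathsf{true})\{t_1^{\ell_1}\}\mathsf{else}\{t_2^{\ell_2}\})^\ell\dashrightarrow_0 t_1^{\ell_1}$, and with $\mathsf{false}$ to $t_2^{\ell_2}$; (Read1) $(\{\overline{s:v},s_i:v_i,\overline{s:v}'\}^{\ell_1}[s_i^{\ell_2}])^{\ell_3}\dashrightarrow_0 v_i^{\ell_3}$; (Read2) $(\{\overline{s:v},\pi:\{\overline{s:v}'\}^{\ell_1'},\overline{s:v}''\}^{\ell_1}[s_x^{\ell_2}])^{\ell_3}\dashrightarrow_0(\{\overline{s:v}'\}^{\ell_1'}[s_x^{\ell_2}])^{\ell_3}$ if $s_x\notin\overline s\cup\overline s''$; (Read3) the same with $\pi:\mathsf{null}^{\ell_1'}$ reduces to $\mathsf{undef}^{\ell_3}$; (Write1) $(\{\overline{s:v},s_i:v_i,\overline{s:v}'\}^{\ell_1}[s_i^{\ell_2}]=v_i')^{\ell_3}\dashrightarrow_0\{\overline{s:v},s_i:v_i',\overline{s:v}'\}^{\ell_3}$;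 (Write2) $(\{\overline{s:v}\}^{\ell_1}[s_x^{\ell_2}]=v_x)^{\ell_3}\dashrightarrow_0\{\overline{s:v},s_x:v_x\}^{\ell_3}$ if $s_x\notin\overline s$; (Del1) $(\mathsf{del}\,\{\overline{s:v},s_i:v_i,\overline{s:v}'\}^{\ell_1}[s_i^{\ell_2}])^{\ell_3}\dashrightarrow_0\{\overline{s:v},\overline{s:v}'\}^{\ell_3}$; (Del2) $(\mathsf{del}\,\{\overline{s:v}\}^{\ell_1}[s_x^{\ell_2}])^{\ell_3}\dashrightarrow_0\{\overline{s:v}\}^{\ell_3}$ if $s_x\notin\overline s$. Lifts: $(((\mathfrak m:t^{\ell_1}),\rho)^{\ell_2}(v))^{\ell_3}\dashrightarrow_0(\mathfrak m:((t,\rho)^{\ell_1}(v))^{\ell_3})^{\ell_3}$; $(\mathsf{if}((\mathfrak m:v)^{\ell_0})\{t_1^{\ell_1}\}\mathsf{else}\{t_2^{\ell_2}\})^\ell\dashrightarrow_0(\mathfrak m:(\mathsf{if}(v)\{t_1^{\ell_1}\}\mathsf{else}\{t_2^{\ell_2}\})^\ell)^\ell$; $(\mathsf{unbox}\,(\mathfrak m:v)^{\ell_1})^{\ell_2}\dashrightarrow_1(\mathfrak m:(\mathsf{unbox}\,v)^{\ell_2})^{\ell_2}$; and at stage 0, for $\mathsf{run}\,\cdot\,\mathsf{in}\,\rho$, for the record and the selector of a read, of a write, and of a delete: an operand of the form $(\mathfrak m:v)^{\ell_1}$ in an expression with outer label $\ell_2$ yields $(\mathfrak m:(\text{same expression with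 }v\text{ in place of the operand})^{\ell_2})^{\ell_2}$. **Evaluation.** Contexts $C^m_n$ as for unlabelled SLamJS (hole at stage $n$ inside stage $m$: records, $\mathsf{fun}$ body at stage $\ge1$, function then argument, $\mathsf{box}$ body one stage up, $\mathsf{unbox}$ argument one stage down, $\mathsf{run}$, $\mathsf{if}$ condition, and at stages $\ge1$ the $\mathsf{if}$ branches, left-to-right in reads/writes/deletes, $\mathsf{run}\,\cdot\,\mathsf{in}\,\rho$, markers), each non-empty context layer carrying an outer label. $C\langle t_1^{\ell_1}\rangle\to_m C\langle t_2^{\ell_2}\rangle$ whenever $C\in\mathcal C^m_n$ and $t_1^{\ell_1}\dashrightarrow_n t_2^{\ell_2}$. **0CFA.** Abstract values $\nu ::= \mathtt{NULL}\mid\mathtt{UNDEF}\mid\mathtt{BOOL}\mid\mathtt{NUM}\mid\mathtt{STR}\mid\mathtt{FUN}(x,e)\mid\mathtt{BOX}(e)\mid\mathtt{REC}(\ell)$; abstract variables are names $x$ or $\ell.p$ ($p$ a field name). An abstract cache is $\Gamma:\mathrm{Label}\to\mathcal P(\mathrm{AbsVal})$, an abstract environment is $\varrho:\mathrm{AbsVar}\to\mathcal P(\mathrm{AbsVal})$. $\lceil k\rceil$ is $\mathtt{NULL},\mathtt{UNDEF},\mathtt{BOOL},\mathtt{NUM},\mathtt{STR}$ according to the kind of $k$. $\mathtt{proto}(\ell)_\varrho$ is the least set $P$ of labels with $\ell\in P$ and $\ell'\in P$ whenever $p\in P$ and $\mathtt{REC}(\ell')\in\varrho(p.\pi)$. The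 judgements $\Gamma,\varrho\models e$, $\Gamma,\varrho\models\rho$, $\Gamma,\varrho\models\nu\approx t$ are defined by mutual induction (writing $\models$ for $\Gamma,\varrho\models$): $\models k^\ell$ iff $\lceil k\rceil\in\Gamma(\ell)$; $\models x^\ell$ iff $\varrho(x)\subseteq\Gamma(\ell)$; $\models\{\overline{s:e}\}^\ell$ iff all $\models e_i$ and $\exists\mathtt{REC}(\ell')\in\Gamma(\ell).\forall i.\Gamma(\mathrm{lbl}(e_i))\subseteq\varrho(\ell'.s_i)$; $\models(\mathsf{fun}(x)\{e\})^\ell$ iff $\models e$ and $\exists\nu\in\Gamma(\ell).\models\nu\approx\mathsf{fun}(x)\{e\}$; $\models(t_1^{\ell_1}(t_2^{\ell_2}))^\ell$ iff $\models t_1^{\ell_1}$, $\models t_2^{\ell_2}$ and $\forall\mathtt{FUN}(x,t_3^{\ell_3})\in\Gamma(\ell_1).\Gamma(\ell_2)\subseteq\varrho(x)\wedge\Gamma(\ell_3)\subseteq\Gamma(\ell)$; $\models(\mathsf{box}\,e)^\ell$ iff $\models e$ and $\exists\nu\in\Gamma(\ell).\models\nu\approx\mathsf{box}\,e$; $\models(\mathsf{unbox}\,t^\ell)^{\ell_0}$ and $\models(\mathsf{run}\,t^\ell)^{\ell_0}$ iff $\models t^\ell$ and $\forall\mathtt{BOX}(t'^{\ell'})\in\Gamma(\ell).\Gamma(\ell')\subseteq\Gamma(\ell_0)$; $\models(\mathsf{run}\,t^\ell\,\mathsf{in}\,\rho)^{\ell_0}$ iff additionally $\models\rho$; $\models(\mathsf{if}(t_1^{\ell_1})\{t_2^{\ell_2}\}\mathsf{else}\{t_3^{\ell_3}\})^{\ell_4}$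 iff all three hold and $\Gamma(\ell_2)\cup\Gamma(\ell_3)\subseteq\Gamma(\ell_4)$; $\models(t,\rho)^\ell$ iff $\models t^\ell$ and $\models\rho$; $\models(t_1^{\ell_1}[t_2^{\ell_2}])^\ell$ iff both hold, $\forall\mathtt{REC}(\ell')\in\Gamma(\ell_1).\forall s.\forall\ell''\in\mathtt{proto}(\ell')_\varrho.\varrho(\ell''.s)\subseteq\Gamma(\ell)$, and $\mathtt{UNDEF}\in\Gamma(\ell)$; $\models(t_1^{\ell_1}[t_2^{\ell_2}]=t_3^{\ell_3})^\ell$ iff all three hold, $\forall s.\forall\mathtt{REC}(\ell')\in\Gamma(\ell_1).\Gamma(\ell_3)\subseteq\varrho(\ell'.s)$, and $\Gamma(\ell_1)\subseteq\Gamma(\ell)$; $\models(\mathsf{del}\,t_1^{\ell_1}[t_2^{\ell_2}])^\ell$ iff both hold and $\Gamma(\ell_1)\subseteq\Gamma(\ell)$; $\models(\mathfrak m:t_1^{\ell_1})^\ell$ iff $\models t_1^{\ell_1}$ and $\Gamma(\ell_1)\subseteq\Gamma(\ell)$. $\models\rho$ iff $\forall x\in\mathrm{dom}(\rho).\models\rho(x)\wedge\Gamma(\mathrm{lbl}(\rho(x)))\subseteq\varrho(x)$. Approximation: $\models\lceil k\rceil\approx k$; $\models\mathtt{FUN}(x,e)\approx\mathsf{fun}(x)\{e\}$; $\models\mathtt{BOX}(e)\approx\mathsf{box}\,e$; $\models\mathtt{REC}(\ell')\approx\{\overline{s:t^\ell}\}$ if $\forall i.\exists\nu_i\in\varrho(\ell'.s_i).\models\nu_i\approx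 t_i$; $\models\nu\approx t'$ if $\models\nu\approx t$ and $t^\ell\to_n t'^\ell$; $\models\nu\approx(t,\rho)$ if $\models\nu\approx t$ and $\models\rho$. *)

From Stdlib Require Import String List.
Import ListNotations.
Set Implicit Arguments.
Local Open Scope string_scope.

Section SLamJS.
Variables (Label Num Marker : Type).

Definition name := string.

Definition proto_field : string := "__proto__".

Inductive const :=
| CUndef | CNull | CTrue | CFalse
| CStr (s : string)
| CNum (n : Num).

Inductive tm :=
| TConst (k : const)
| TRec (fs : list (string * ex))
| TVar (x : name)
| TFun (x : name) (e : ex)
| TApp (e1 e2 : ex)
| TBox (e : ex)
| TUnbox (e : ex)
| TRun (e : ex)
| TIf (e1 e2 e3 : ex)
| TRead (e1 e2 : ex)
| TWrite (e1 e2 e3 : ex)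
| TDel (e1 e2 : ex)
| TClo (t : tm) (rho : list (name * ex))
| TRunIn (e : ex) (rho : list (name * ex))
| TMark (m : Marker) (e : ex)
with ex :=
| Lab (t : tm) (l : Label).

(** Environments: finite maps from names to (stage-0) values, as
    association lists (the first binding of a name is the relevant one). *)
Definition env := list (name * ex).

Fixpoint lookup (rho : env) (x : name) : option ex :=
  match rho with
  | [] => None
  | (y, v) :: r => if String.eqb x y then Some v else lookup r x
  end.

Definition upd (rho : env) (x : name) (v : ex) : env := (x, v) :: rho.

Definition lbl (e : ex) : Label := let 'Lab _ l := e in l.
Definition relab (e : ex) (l' : Label) : ex := let 'Lab t _ := e in Lab t l'.
Definition clo (rho : env) (e : ex) : ex := let 'Lab t l := e in Lab (TClo t rho) l.

Inductive is_val : nat -> ex -> Prop :=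
| V_clo x e rho l : is_val 0 (Lab (TClo (TFun x e) rho) l)
| V_const n k l : is_val n (Lab (TConst k) l)
| V_rec n fs l : (forall p, In p fs -> is_val n (snd p)) -> is_val n (Lab (TRec fs) l)
| V_box n v l : is_val (S n) v -> is_val n (Lab (TBox v) l)
| V_mark n m v l : is_val n v -> is_val n (Lab (TMark m v) l)
| V_var n x l : is_val (S n) (Lab (TVar x) l)
| V_fun n x v l : is_val (S n) v -> is_val (S n) (Lab (TFun x v) l)
| V_app n v1 v2 l : is_val (S n) v1 -> is_val (S n) v2 -> is_val (S n) (Lab (TApp v1 v2) l)
| V_run n v l : is_val (S n) v -> is_val (S n) (Lab (TRun v) l)
| V_if n v1 v2 v3 l : is_val (S n) v1 -> is_val (S n) v2 -> is_val (S n) v3 ->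
    is_val (S n) (Lab (TIf v1 v2 v3) l)
| V_read n v1 v2 l : is_val (S n) v1 -> is_val (S n) v2 -> is_val (S n) (Lab (TRead v1 v2) l)
| V_write n v1 v2 v3 l : is_val (S n) v1 -> is_val (S n) v2 -> is_val (S n) v3 ->
    is_val (S n) (Lab (TWrite v1 v2 v3) l)
| V_del n v1 v2 l : is_val (S n) v1 -> is_val (S n) v2 -> is_val (S n) (Lab (TDel v1 v2) l)
| V_unbox n v l : is_val (S n) v -> is_val (S (S n)) (Lab (TUnbox v) l).

Definition vals (n : nat) (fs : list (string * ex)) : Prop :=
  forall p, In p fs -> is_val n (snd p).

Definition str (s : string) (l : Label) : ex := Lab (TConst (CStr s)) l.

Inductive tstep : nat -> ex -> ex -> Prop :=
| P_const n k rho l :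
    tstep n (Lab (TClo (TConst k) rho) l) (Lab (TConst k) l)
| P_rec n fs rho l :
    tstep n (Lab (TClo (TRec fs) rho) l)
            (Lab (TRec (map (fun p => (fst p, clo rho (snd p))) fs)) l)
| P_var n x rho l :
    tstep (S n) (Lab (TClo (TVar x) rho) l) (Lab (TVar x) l)
| P_fun n x e rho l :
    tstep (S n) (Lab (TClo (TFun x e) rho) l) (Lab (TFun x (clo rho e)) l)
| P_app n e1 e2 rho l :
    tstep n (Lab (TClo (TApp e1 e2) rho) l) (Lab (TApp (clo rho e1) (clo rho e2)) l)
| P_box n e rho l :
    tstep n (Lab (TClo (TBox e) rho) l) (Lab (TBox (clo rho e)) l)
| P_unbox n e rho l :
    tstep n (Lab (TClo (TUnbox e) rho) l) (Lab (TUnbox (clo rho e)) l)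
| P_run0 e rho l :
    tstep 0 (Lab (TClo (TRun e) rho) l) (Lab (TRunIn (clo rho e) rho) l)
| P_runS n e rho l :
    tstep (S n) (Lab (TClo (TRun e) rho) l) (Lab (TRun (clo rho e)) l)
| P_if n e1 e2 e3 rho l :
    tstep n (Lab (TClo (TIf e1 e2 e3) rho) l)
            (Lab (TIf (clo rho e1) (clo rho e2) (clo rho e3)) l)
| P_read n e1 e2 rho l :
    tstep n (Lab (TClo (TRead e1 e2) rho) l) (Lab (TRead (clo rho e1) (clo rho e2)) l)
| P_write n e1 e2 e3 rho l :
    tstep n (Lab (TClo (TWrite e1 e2 e3) rho) l)
            (Lab (TWrite (clo rho e1) (clo rho e2) (clo rho e3)) l)
| P_del n e1 e2 rho l :
    tstep n (Lab (TClo (TDel e1 e2) rho) l) (Lab (TDel (clo rho e1) (clo rho e2)) l)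
| P_mark n m e rho l :
    tstep n (Lab (TClo (TMark m e) rho) l) (Lab (TMark m (clo rho e)) l)
| R_lookup x rho v l :
    lookup rho x = Some v ->
    tstep 0 (Lab (TClo (TVar x) rho) l) (relab v l)
| R_apply x t l1 rho l2 v l3 :
    is_val 0 v ->
    tstep 0 (Lab (TApp (Lab (TClo (TFun x (Lab t l1)) rho) l2) v) l3)
            (Lab (TClo t (upd rho x v)) l1)
| R_unbox v l1 l2 :
    is_val 1 v ->
    tstep 1 (Lab (TUnbox (Lab (TBox v) l1)) l2) (relab v l2)
| R_run v l1 rho l2 :
    is_val 1 v ->
    tstep 0 (Lab (TRunIn (Lab (TBox v) l1) rho) l2) (clo rho (relab v l2))
| R_if_true l0 e1 e2 l :
    tstep 0 (Lab (TIf (Lab (TConst CTrue) l0) e1 e2) l) e1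
| R_if_false l0 e1 e2 l :
    tstep 0 (Lab (TIf (Lab (TConst CFalse) l0) e1 e2) l) e2
| R_read1 fs1 s vi fs2 l1 l2 l3 :
    vals 0 fs1 -> is_val 0 vi -> vals 0 fs2 ->
    tstep 0 (Lab (TRead (Lab (TRec (fs1 ++ (s, vi) :: fs2)) l1) (str s l2)) l3)
            (relab vi l3)
| R_read2 fs fs' fs'' sx l1' l1 l2 l3 :
    vals 0 fs -> vals 0 fs' -> vals 0 fs'' ->
    ~ In sx (map fst fs) -> ~ In sx (map fst fs'') ->
    tstep 0 (Lab (TRead (Lab (TRec (fs ++ (proto_field, Lab (TRec fs') l1') :: fs'')) l1)
                        (str sx l2)) l3)
            (Lab (TRead (Lab (TRec fs') l1') (str sx l2)) l3)
| R_read3 fs fs'' sx l1' l1 l2 l3 :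
    vals 0 fs -> vals 0 fs'' ->
    ~ In sx (map fst fs) -> ~ In sx (map fst fs'') ->
    tstep 0 (Lab (TRead (Lab (TRec (fs ++ (proto_field, Lab (TConst CNull) l1') :: fs'')) l1)
                        (str sx l2)) l3)
            (Lab (TConst CUndef) l3)
| R_write1 fs1 s vi fs2 vi' l1 l2 l3 :
    vals 0 fs1 -> is_val 0 vi -> vals 0 fs2 -> is_val 0 vi' ->
    tstep 0 (Lab (TWrite (Lab (TRec (fs1 ++ (s, vi) :: fs2)) l1) (str s l2) vi') l3)
            (Lab (TRec (fs1 ++ (s, vi') :: fs2)) l3)
| R_write2 fs sx vx l1 l2 l3 :
    vals 0 fs -> ~ In sx (map fst fs) -> is_val 0 vx ->
    tstep 0 (Lab (TWrite (Lab (TRec fs) l1) (str sx l2) vx) l3)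
            (Lab (TRec (fs ++ [(sx, vx)])) l3)
| R_del1 fs1 s vi fs2 l1 l2 l3 :
    vals 0 fs1 -> is_val 0 vi -> vals 0 fs2 ->
    tstep 0 (Lab (TDel (Lab (TRec (fs1 ++ (s, vi) :: fs2)) l1) (str s l2)) l3)
            (Lab (TRec (fs1 ++ fs2)) l3)
| R_del2 fs sx l1 l2 l3 :
    vals 0 fs -> ~ In sx (map fst fs) ->
    tstep 0 (Lab (TDel (Lab (TRec fs) l1) (str sx l2)) l3)
            (Lab (TRec fs) l3)
| L_app m t l1 rho l2 v l3 :
    is_val 0 v ->
    tstep 0 (Lab (TApp (Lab (TClo (TMark m (Lab t l1)) rho) l2) v) l3)
            (Lab (TMark m (Lab (TApp (Lab (TClo t rho) l1) v) l3)) l3)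
| L_if m v l0 e1 e2 l :
    is_val 0 v ->
    tstep 0 (Lab (TIf (Lab (TMark m v) l0) e1 e2) l)
            (Lab (TMark m (Lab (TIf v e1 e2) l)) l)
| L_unbox m v l1 l2 :
    is_val 0 v ->
    tstep 1 (Lab (TUnbox (Lab (TMark m v) l1)) l2)
            (Lab (TMark m (Lab (TUnbox v) l2)) l2)
| L_runin m v l1 rho l2 :
    is_val 0 v ->
    tstep 0 (Lab (TRunIn (Lab (TMark m v) l1) rho) l2)
            (Lab (TMark m (Lab (TRunIn v rho) l2)) l2)
| L_read_rec m v l1 e2 l2 :
    is_val 0 v ->
    tstep 0 (Lab (TRead (Lab (TMark m v) l1) e2) l2)
            (Lab (TMark m (Lab (TRead v e2) l2)) l2)
| L_read_sel m e1 v l1 l2 :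
    is_val 0 v ->
    tstep 0 (Lab (TRead e1 (Lab (TMark m v) l1)) l2)
            (Lab (TMark m (Lab (TRead e1 v) l2)) l2)
| L_write_rec m v l1 e2 e3 l2 :
    is_val 0 v ->
    tstep 0 (Lab (TWrite (Lab (TMark m v) l1) e2 e3) l2)
            (Lab (TMark m (Lab (TWrite v e2 e3) l2)) l2)
| L_write_sel m e1 v l1 e3 l2 :
    is_val 0 v ->
    tstep 0 (Lab (TWrite e1 (Lab (TMark m v) l1) e3) l2)
            (Lab (TMark m (Lab (TWrite e1 v e3) l2)) l2)
| L_del_rec m v l1 e2 l2 :
    is_val 0 v ->
    tstep 0 (Lab (TDel (Lab (TMark m v) l1) e2) l2)
            (Lab (TMark m (Lab (TDel v e2) l2)) l2)
| L_del_sel m e1 v l1 l2 :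
    is_val 0 v ->
    tstep 0 (Lab (TDel e1 (Lab (TMark m v) l1)) l2)
            (Lab (TMark m (Lab (TDel e1 v) l2)) l2).

(** Labelled evaluation  e →_m e' : C<t1^l1> →_m C<t2^l2> for C in C^m_n and
    t1^l1 ⇢_n t2^l2, presented as closure of ⇢ under the evaluation-context
    layers (each layer keeps its outer label). *)
Inductive step : nat -> ex -> ex -> Prop :=
| S_top m e e' : tstep m e e' -> step m e e'
| S_rec m fs1 s e e' fs2 l :
    vals m fs1 -> step m e e' ->
    step m (Lab (TRec (fs1 ++ (s, e) :: fs2)) l) (Lab (TRec (fs1 ++ (s, e') :: fs2)) l)
| S_fun m x e e' l :
    step (S m) e e' -> step (S m) (Lab (TFun x e) l) (Lab (TFun x e') l)
| S_app1 m e1 e1' e2 l :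
    step m e1 e1' -> step m (Lab (TApp e1 e2) l) (Lab (TApp e1' e2) l)
| S_app2 m v e2 e2' l :
    is_val m v -> step m e2 e2' -> step m (Lab (TApp v e2) l) (Lab (TApp v e2') l)
| S_box m e e' l :
    step (S m) e e' -> step m (Lab (TBox e) l) (Lab (TBox e') l)
| S_unbox m e e' l :
    step m e e' -> step (S m) (Lab (TUnbox e) l) (Lab (TUnbox e') l)
| S_run m e e' l :
    step m e e' -> step m (Lab (TRun e) l) (Lab (TRun e') l)
| S_if1 m e1 e1' e2 e3 l :
    step m e1 e1' -> step m (Lab (TIf e1 e2 e3) l) (Lab (TIf e1' e2 e3) l)
| S_if2 m v1 e2 e2' e3 l :
    is_val (S m) v1 -> step (S m) e2 e2' ->
    step (S m) (Lab (TIf v1 e2 e3) l) (Lab (TIf v1 e2' e3) l)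
| S_if3 m v1 v2 e3 e3' l :
    is_val (S m) v1 -> is_val (S m) v2 -> step (S m) e3 e3' ->
    step (S m) (Lab (TIf v1 v2 e3) l) (Lab (TIf v1 v2 e3') l)
| S_read1 m e1 e1' e2 l :
    step m e1 e1' -> step m (Lab (TRead e1 e2) l) (Lab (TRead e1' e2) l)
| S_read2 m v1 e2 e2' l :
    is_val m v1 -> step m e2 e2' -> step m (Lab (TRead v1 e2) l) (Lab (TRead v1 e2') l)
| S_write1 m e1 e1' e2 e3 l :
    step m e1 e1' -> step m (Lab (TWrite e1 e2 e3) l) (Lab (TWrite e1' e2 e3) l)
| S_write2 m v1 e2 e2' e3 l :
    is_val m v1 -> step m e2 e2' ->
    step m (Lab (TWrite v1 e2 e3) l) (Lab (TWrite v1 e2' e3) l)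
| S_write3 m v1 v2 e3 e3' l :
    is_val m v1 -> is_val m v2 -> step m e3 e3' ->
    step m (Lab (TWrite v1 v2 e3) l) (Lab (TWrite v1 v2 e3') l)
| S_del1 m e1 e1' e2 l :
    step m e1 e1' -> step m (Lab (TDel e1 e2) l) (Lab (TDel e1' e2) l)
| S_del2 m v1 e2 e2' l :
    is_val m v1 -> step m e2 e2' -> step m (Lab (TDel v1 e2) l) (Lab (TDel v1 e2') l)
| S_runin m e e' rho l :
    step m e e' -> step m (Lab (TRunIn e rho) l) (Lab (TRunIn e' rho) l)
| S_mark m mk e e' l :
    step m e e' -> step m (Lab (TMark mk e) l) (Lab (TMark mk e') l).

Inductive absval :=
| ANull | AUndef | ABool | ANum | AStr
| AFun (x : name) (e : ex)
| ABox (e : ex)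
| ARec (l : Label).

Inductive absvar :=
| AVName (x : name)
| AVField (l : Label) (p : string).

Definition ceil (k : const) : absval :=
  match k with
  | CNull => ANull
  | CUndef => AUndef
  | CTrue | CFalse => ABool
  | CNum _ => ANum
  | CStr _ => AStr
  end.

Definition subset (A B : absval -> Prop) : Prop := forall nu, A nu -> B nu.

Inductive proto (rh : absvar -> absval -> Prop) (l : Label) : Label -> Prop :=
| proto_refl : proto rh l l
| proto_next p l' : proto rh l p -> rh (AVField p proto_field) (ARec l') -> proto rh l l'.

Section Judgement.
Variable G : Label -> absval -> Prop.
Variable rh : absvar -> absval -> Prop.

Inductive models : ex -> Prop :=
| M_const k l : G l (ceil k) -> models (Lab (TConst k) l)
| M_var x l : subset (rh (AVName x)) (G l) -> models (Lab (TVar x) l)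
| M_rec fs l :
    (forall p, In p fs -> models (snd p)) ->
    (exists l', G l (ARec l') /\
       forall p, In p fs -> subset (G (lbl (snd p))) (rh (AVField l' (fst p)))) ->
    models (Lab (TRec fs) l)
| M_fun x e l :
    models e -> (exists nu, G l nu /\ approx nu (TFun x e)) -> models (Lab (TFun x e) l)
| M_app e1 e2 l :
    models e1 -> models e2 ->
    (forall x e3, G (lbl e1) (AFun x e3) ->
       subset (G (lbl e2)) (rh (AVName x)) /\ subset (G (lbl e3)) (G l)) ->
    models (Lab (TApp e1 e2) l)
| M_box e l :
    models e -> (exists nu, G l nu /\ approx nu (TBox e)) -> models (Lab (TBox e) l)
| M_unbox e l0 :
    models e -> (forall e', G (lbl e) (ABox e') -> subset (G (lbl e')) (G l0)) ->
    models (Lab (TUnbox e) l0)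
| M_run e l0 :
    models e -> (forall e', G (lbl e) (ABox e') -> subset (G (lbl e')) (G l0)) ->
    models (Lab (TRun e) l0)
| M_runin e rho l0 :
    models e -> (forall e', G (lbl e) (ABox e') -> subset (G (lbl e')) (G l0)) ->
    models_env rho ->
    models (Lab (TRunIn e rho) l0)
| M_if e1 e2 e3 l :
    models e1 -> models e2 -> models e3 ->
    subset (G (lbl e2)) (G l) -> subset (G (lbl e3)) (G l) ->
    models (Lab (TIf e1 e2 e3) l)
| M_clo t rho l :
    models (Lab t l) -> models_env rho -> models (Lab (TClo t rho) l)
| M_read e1 e2 l :
    models e1 -> models e2 ->
    (forall l' s l'', G (lbl e1) (ARec l') -> proto rh l' l'' ->
       subset (rh (AVField l'' s)) (G l)) ->
    G l AUndef ->
    models (Lab (TRead e1 e2) l)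
| M_write e1 e2 e3 l :
    models e1 -> models e2 -> models e3 ->
    (forall s l', G (lbl e1) (ARec l') -> subset (G (lbl e3)) (rh (AVField l' s))) ->
    subset (G (lbl e1)) (G l) ->
    models (Lab (TWrite e1 e2 e3) l)
| M_del e1 e2 l :
    models e1 -> models e2 -> subset (G (lbl e1)) (G l) ->
    models (Lab (TDel e1 e2) l)
| M_mark m e l :
    models e -> subset (G (lbl e)) (G l) -> models (Lab (TMark m e) l)
with models_env : env -> Prop :=
| ME rho :
    (forall x v, lookup rho x = Some v ->
       models v /\ subset (G (lbl v)) (rh (AVName x))) ->
    models_env rho
with approx : absval -> tm -> Prop :=
| A_const k : approx (ceil k) (TConst k)
| A_fun x e : approx (AFun x e) (TFun x e)
| A_box e : approx (ABox e) (TBox e)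
| A_rec l' fs :
    (forall s t l, In (s, Lab t l) fs -> exists nu, rh (AVField l' s) nu /\ approx nu t) ->
    approx (ARec l') (TRec fs)
| A_step nu t t' n l :
    approx nu t -> step n (Lab t l) (Lab t' l) -> approx nu t'
| A_clo nu t rho :
    approx nu t -> models_env rho -> approx nu (TClo t rho).

End Judgement.
End SLamJS.

(* Each reduction rule is checked against the
   constraints carried by its redex; to push the result through evaluation
   contexts one also shows that the cache entry of the contractum's label is
   contained in that of the redex's.  The only non-local step is the one for
   beta, unbox and run: there the constraints speak about the abstract value
   FUN(x,e0) or BOX(e0) cached for the function or box, whereas the contractum
   is the concrete body.  An invariant of [approx] ([approx_shape]) shows that
   e0 carries the label of that body, which is all the constraints look at. *)

From Stdlib Require Import String List.
Set Implicit Arguments.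

Section Soundness.
Variables (L N M : Type).
Variable G : L -> absval L N M -> Prop.
Variable rh : absvar L -> absval L N M -> Prop.

Lemma subset_refl (A : absval L N M -> Prop) : subset A A.
Proof. now intros nu. Qed.

Lemma lbl_clo (rho : env L N M) (e : ex L N M) : lbl (clo rho e) = lbl e.
Proof. now destruct e. Qed.

Lemma lbl_relab (e : ex L N M) l : lbl (relab e l) = l.
Proof. now destruct e. Qed.

Lemma step_lbl_S n (e e' : ex L N M) : step (S n) e e' -> lbl e' = lbl e.
Proof.
  intros H; remember (S n) as k eqn:Hk; destruct H; try reflexivity.
  destruct H; try reflexivity; try discriminate; apply lbl_relab.
Qed.

Fixpoint strip_clo (t : tm L N M) : tm L N M :=
  match t with TClo t' _ => strip_clo t' | _ => t end.

Definition tm_of (e : ex L N M) : tm L N M := let 'Lab t _ := e in t.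

(* Evaluation starting from a constant, record, function or box (possibly under
   closures) only ever reaches terms of these shapes, and keeps the label of a
   function or box body; the [False] case is what makes the invariant closed
   under evaluation. *)
Definition approx_shape (nu : absval L N M) (t : tm L N M) : Prop :=
  match strip_clo t with
  | @TConst _ _ _ _ | TRec _ => True
  | TFun x e => exists e0, nu = AFun x e0 /\ lbl e0 = lbl e
  | TBox e => exists e0, nu = ABox e0 /\ lbl e0 = lbl e
  | _ => False
  end.

Lemma tstep_approx_shape k (e e' : ex L N M) nu :
  tstep k e e' -> approx_shape nu (tm_of e) -> approx_shape nu (tm_of e').
Proof.
  destruct 1; unfold approx_shape; simpl; try tauto;
    intros [e0 [-> Hl]]; exists e0; now rewrite lbl_clo.
Qed.

Lemma step_approx_shape k (e e' : ex L N M) nu :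
  step k e e' -> approx_shape nu (tm_of e) -> approx_shape nu (tm_of e').
Proof.
  destruct 1 as [k e e' H| | k x e e' l H | | | k e e' l H | | | | | | | | | | | | | |];
    try (unfold approx_shape; simpl; tauto).
  - exact (tstep_approx_shape nu H).
  - intros [e0 [-> Hl]]; exists e0; split; [reflexivity|].
    now rewrite (step_lbl_S H).
  - intros [e0 [-> Hl]]; exists e0; split; [reflexivity|].
    now rewrite (step_lbl_S H).
Qed.

Lemma approx_shape_of_approx nu (t : tm L N M) :
  approx G rh nu t -> approx_shape nu t.
Proof.
  induction 1 as [| | | | nu t t' n l _ IH Hs |]; unfold approx_shape; simpl; eauto.
  exact (step_approx_shape nu Hs IH).
Qed.

Lemma models_clo (rho : env L N M) e :
  models G rh e -> models_env G rh rho -> models G rh (clo rho e).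
Proof. destruct e; now constructor. Qed.

Lemma models_relab (e : ex L N M) l :
  models G rh e -> subset (G (lbl e)) (G l) -> models G rh (relab e l).
Proof.
  intros He; revert l; induction He; simpl; intros l' Hl;
    econstructor; unfold subset in *; firstorder eauto.
Qed.

Lemma proto_trans l1 l2 l3 :
  proto rh l1 l2 -> proto rh l2 l3 -> proto rh l1 l3.
Proof. intros H12 H23; induction H23; eauto using proto_next. Qed.

Definition field_models l' (p : string * ex L N M) : Prop :=
  models G rh (snd p) /\ subset (G (lbl (snd p))) (rh (AVField l' (fst p))).

Lemma models_rec_iff fs l :
  models G rh (Lab (TRec fs) l) <->
  exists l', G l (ARec N M l') /\ Forall (field_models l') fs.
Proof.
  split.
  - inversion 1 as [| | ? ? Hfs [l' [Hl Hsub]] | | | | | | | | | | | |]; subst.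
    exists l'; split; [exact Hl|].
    apply Forall_forall; intros p Hp; split; auto.
  - intros [l' [Hl Hfs]]; rewrite Forall_forall in Hfs.
    constructor; [intros p Hp; apply Hfs, Hp|].
    exists l'; split; [exact Hl|]; intros p Hp; apply Hfs, Hp.
Qed.

Lemma models_fun_inv x (e : ex L N M) l :
  models G rh (Lab (TFun x e) l) ->
  models G rh e /\ exists e0, G l (AFun x e0) /\ lbl e0 = lbl e.
Proof.
  inversion 1 as [| | | ? ? ? He [nu [Hnu Happrox]] | | | | | | | | | | |]; subst.
  split; [exact He|].
  destruct (approx_shape_of_approx Happrox) as [e0 [-> Hl]]; eauto.
Qed.

Lemma models_box_inv (e : ex L N M) l :
  models G rh (Lab (TBox e) l) ->
  models G rh e /\ exists e0, G l (ABox e0) /\ lbl e0 = lbl e.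
Proof.
  inversion 1 as [| | | | | ? ? He [nu [Hnu Happrox]] | | | | | | | | |]; subst.
  split; [exact He|].
  destruct (approx_shape_of_approx Happrox) as [e0 [-> Hl]]; eauto.
Qed.

Lemma models_clo_inv t (rho : env L N M) l :
  models G rh (Lab (TClo t rho) l) -> models G rh (Lab t l) /\ models_env G rh rho.
Proof. now inversion 1. Qed.

Lemma models_env_lookup (rho : env L N M) x v :
  models_env G rh rho -> lookup rho x = Some v ->
  models G rh v /\ subset (G (lbl v)) (rh (AVName L x)).
Proof. destruct 1 as [rho Henv]; apply Henv. Qed.

Lemma models_env_upd (rho : env L N M) x v :
  models_env G rh rho -> models G rh v -> subset (G (lbl v)) (rh (AVName L x)) ->
  models_env G rh (upd rho x v).
Proof.
  intros Hrho Hv Hvx; constructor; intros y w; simpl.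
  destruct (String.eqb_spec y x) as [-> | _].
  - now injection 1 as <-.
  - now apply models_env_lookup.
Qed.

Lemma models_lookup x rho (v : ex L N M) l :
  lookup rho x = Some v -> models G rh (Lab (TClo (TVar L N M x) rho) l) ->
  models G rh (relab v l).
Proof.
  intros Hx Hm; apply models_clo_inv in Hm as [Hvar Hrho].
  inversion Hvar as [| ? ? Hsub | | | | | | | | | | | | |]; subst.
  destruct (models_env_lookup x Hrho Hx) as [Hv Hvx].
  apply models_relab; [exact Hv|]; intros nu Hnu; apply Hsub, Hvx, Hnu.
Qed.

Lemma models_apply x t l1 rho (v : ex L N M) l2 l3 :
  models G rh (Lab (TApp (Lab (TClo (TFun x (Lab t l1)) rho) l2) v) l3) ->
  models G rh (Lab (TClo t (upd rho x v)) l1) /\ subset (G l1) (G l3).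
Proof.
  inversion 1 as [| | | | ? ? ? Hf Hv Happ | | | | | | | | | |]; subst.
  apply models_clo_inv in Hf as [Hf Hrho].
  apply models_fun_inv in Hf as [Ht [e0 [He0 Hl]]].
  destruct (Happ x e0 He0) as [Hvx Hbody]; simpl in Hl; rewrite Hl in Hbody.
  split; [|exact Hbody].
  constructor; [exact Ht|]; now apply models_env_upd.
Qed.

Lemma models_unbox_box (v : ex L N M) l1 l2 :
  models G rh (Lab (TUnbox (Lab (TBox v) l1)) l2) -> models G rh (relab v l2).
Proof.
  inversion 1 as [| | | | | | ? ? Hb Hunbox | | | | | | | |]; subst.
  apply models_box_inv in Hb as [Hv [e0 [He0 Hl]]].
  apply models_relab; [exact Hv|]; rewrite <- Hl; exact (Hunbox e0 He0).
Qed.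

Lemma models_run_box (v : ex L N M) l1 rho l2 :
  models G rh (Lab (TRunIn (Lab (TBox v) l1) rho) l2) ->
  models G rh (clo rho (relab v l2)).
Proof.
  inversion 1 as [| | | | | | | | ? ? ? Hb Hrun Hrho | | | | | |]; subst.
  apply models_box_inv in Hb as [Hv [e0 [He0 Hl]]].
  apply models_clo; [|exact Hrho].
  apply models_relab; [exact Hv|]; rewrite <- Hl; exact (Hrun e0 He0).
Qed.

Lemma models_read_field fs (s : string) (v : ex L N M) l1 e2 l3 :
  In (s, v) fs -> models G rh (Lab (TRead (Lab (TRec fs) l1) e2) l3) ->
  models G rh (relab v l3).
Proof.
  intros Hin; inversion 1 as [| | | | | | | | | | | ? ? ? Hrec He2 Hread Hundef | | |]; subst.
  apply models_rec_iff in Hrec as [l' [Hl' Hfs]].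
  destruct (proj1 (Forall_forall _ _) Hfs _ Hin) as [Hv Hvs].
  apply models_relab; [exact Hv|].
  intros nu Hnu; exact (Hread l' s l' Hl' (proto_refl _ _) nu (Hvs nu Hnu)).
Qed.

Lemma models_read_proto fs fs' l1' l1 (e2 : ex L N M) l3 :
  In (proto_field, Lab (TRec fs') l1') fs ->
  models G rh (Lab (TRead (Lab (TRec fs) l1) e2) l3) ->
  models G rh (Lab (TRead (Lab (TRec fs') l1') e2) l3).
Proof.
  intros Hin; inversion 1 as [| | | | | | | | | | | ? ? ? Hrec He2 Hread Hundef | | |]; subst.
  apply models_rec_iff in Hrec as [l' [Hl' Hfs]].
  destruct (proj1 (Forall_forall _ _) Hfs _ Hin) as [Hproto Hsub].
  constructor; [exact Hproto | exact He2 | | exact Hundef].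
  intros l'' s l''' Hl'' Hp; apply (Hread l' s l''' Hl').
  apply proto_trans with l''; [|exact Hp].
  apply proto_next with l'; [apply proto_refl | exact (Hsub _ Hl'')].
Qed.

Lemma models_write_rec fs fs' l1 s l2 (v : ex L N M) l3 :
  incl fs' ((s, v) :: fs) ->
  models G rh (Lab (TWrite (Lab (TRec fs) l1) (str N M s l2) v) l3) ->
  models G rh (Lab (TRec fs') l3).
Proof.
  intros Hincl; inversion 1 as [| | | | | | | | | | | | ? ? ? ? Hrec He2 Hv Hwrite Hsub | |]; subst.
  apply models_rec_iff in Hrec as [l' [Hl' Hfs]].
  apply models_rec_iff; exists l'; split; [exact (Hsub _ Hl')|].
  apply (incl_Forall Hincl); constructor; [|exact Hfs].
  split; [exact Hv | exact (Hwrite s l' Hl')].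
Qed.

Lemma models_del_rec fs fs' l1 (e2 : ex L N M) l3 :
  incl fs' fs -> models G rh (Lab (TDel (Lab (TRec fs) l1) e2) l3) ->
  models G rh (Lab (TRec fs') l3).
Proof.
  intros Hincl; inversion 1 as [| | | | | | | | | | | | | ? ? ? Hrec He2 Hsub |]; subst.
  apply models_rec_iff in Hrec as [l' [Hl' Hfs]].
  apply models_rec_iff; exists l'; split; [exact (Hsub _ Hl') | exact (incl_Forall Hincl Hfs)].
Qed.

Lemma models_push_rec fs (rho : env L N M) l :
  models G rh (Lab (TClo (TRec fs) rho) l) ->
  models G rh (Lab (TRec (map (fun p => (fst p, clo rho (snd p))) fs)) l).
Proof.
  intros Hm; apply models_clo_inv in Hm as [Hrec Hrho].
  apply models_rec_iff in Hrec as [l' [Hl' Hfs]].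
  apply models_rec_iff; exists l'; split; [exact Hl'|].
  apply Forall_map; refine (Forall_impl _ _ Hfs).
  intros [s e] [He Hsub]; split; simpl; rewrite ?lbl_clo; auto using models_clo.
Qed.

Lemma models_push_fun x e (rho : env L N M) l :
  models G rh (Lab (TClo (TFun x e) rho) l) -> models G rh (Lab (TFun x (clo rho e)) l).
Proof.
  intros Hm; apply models_clo_inv in Hm as [Hf Hrho].
  inversion Hf as [| | | ? ? ? He [nu [Hnu Happrox]] | | | | | | | | | | |]; subst.
  constructor; [now apply models_clo|]; exists nu; split; [exact Hnu|].
  apply A_step with (TClo (TFun x e) rho) 1 l; [now apply A_clo|].
  apply S_top, P_fun.
Qed.

Lemma models_push_box e (rho : env L N M) l :
  models G rh (Lab (TClo (TBox e) rho) l) -> models G rh (Lab (TBox (clo rho e)) l).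
Proof.
  intros Hm; apply models_clo_inv in Hm as [Hb Hrho].
  inversion Hb as [| | | | | ? ? He [nu [Hnu Happrox]] | | | | | | | | |]; subst.
  constructor; [now apply models_clo|]; exists nu; split; [exact Hnu|].
  apply A_step with (TClo (TBox e) rho) 0 l; [now apply A_clo|].
  apply S_top, P_box.
Qed.

Lemma models_lift_app m t l1 rho l2 (v : ex L N M) l3 :
  models G rh (Lab (TApp (Lab (TClo (TMark m (Lab t l1)) rho) l2) v) l3) ->
  models G rh (Lab (TMark m (Lab (TApp (Lab (TClo t rho) l1) v) l3)) l3).
Proof.
  inversion 1 as [| | | | ? ? ? Hf Hv Happ | | | | | | | | | |]; subst.
  apply models_clo_inv in Hf as [Hmark Hrho].
  inversion Hmark as [| | | | | | | | | | | | | | ? ? ? Ht Hsub]; subst.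
  constructor; [|apply subset_refl].
  constructor; [now constructor | exact Hv |].
  intros y e3 Hy; exact (Happ y e3 (Hsub _ Hy)).
Qed.

Ltac inv_models :=
  repeat match goal with
  | H : models _ _ (Lab (_ _) _) |- _ => inversion H; subst; clear H
  | H : models _ _ (Lab (_ _ _) _) |- _ => inversion H; subst; clear H
  | H : models _ _ (Lab (_ _ _ _) _) |- _ => inversion H; subst; clear H
  end.

Lemma tstep_models k (e e' : ex L N M) :
  tstep k e e' -> models G rh e ->
  models G rh e' /\ subset (G (lbl e')) (G (lbl e)).
Proof.
  destruct 1; intros Hm; simpl; rewrite ?lbl_clo, ?lbl_relab.
  all: try solve [exact (models_apply Hm)
                 | inv_models; split; assumption].
  all: split; [|apply subset_refl].
  all: try solve [eauto using models_push_rec, models_push_fun, models_push_box,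
                    models_lookup, models_unbox_box, models_run_box,
                    models_read_field, models_read_proto, in_elt, models_lift_app].
  all: try solve [(eapply models_write_rec + eapply models_del_rec); [|exact Hm];
                  intros p; simpl; rewrite ?in_app_iff; simpl; tauto].
  all: try solve [apply models_clo_inv in Hm as [Ht Hrho]; inv_models;
                  constructor; rewrite ?lbl_clo; auto using models_clo].
  all: try solve [inv_models; now constructor].
  all: inv_models; constructor; [econstructor|]; simpl in *; unfold subset in *; firstorder eauto.
Qed.

Lemma models_fun_step m x (e e' : ex L N M) l :
  step (S m) e e' -> models G rh e' ->
  models G rh (Lab (TFun x e) l) -> models G rh (Lab (TFun x e') l).
Proof.
  intros Hs He'; inversion 1 as [| | | ? ? ? _ [nu [Hnu Happrox]] | | | | | | | | | | |]; subst.
  constructor; [exact He'|]; exists nu; split; [exact Hnu|].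
  apply A_step with (TFun x e) (S m) l; [exact Happrox | now apply S_fun].
Qed.

Lemma models_box_step m (e e' : ex L N M) l :
  step (S m) e e' -> models G rh e' ->
  models G rh (Lab (TBox e) l) -> models G rh (Lab (TBox e') l).
Proof.
  intros Hs He'; inversion 1 as [| | | | | ? ? _ [nu [Hnu Happrox]] | | | | | | | | |]; subst.
  constructor; [exact He'|]; exists nu; split; [exact Hnu|].
  apply A_step with (TBox e) m l; [exact Happrox | now apply S_box].
Qed.

Lemma step_models k (e e' : ex L N M) :
  step k e e' -> models G rh e ->
  models G rh e' /\ subset (G (lbl e')) (G (lbl e)).
Proof.
  induction 1 as [k e e' H| k fs1 s e e' fs2 l _ _ IH | | | | | | | | | | | | | | | | | |];
    intros Hm.
  { exact (tstep_models H Hm). }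
  { split; [|apply subset_refl].
    apply models_rec_iff in Hm as [l' [Hl' Hfs]].
    rewrite Forall_app, Forall_cons_iff in Hfs; destruct Hfs as [Hfs1 [[He Hes] Hfs2]].
    destruct (IH He) as [He' Hsub].
    apply models_rec_iff; exists l'; split; [exact Hl'|].
    rewrite Forall_app, Forall_cons_iff; repeat split; auto.
    intros nu Hnu; apply Hes, Hsub, Hnu. }
  all: inversion Hm; subst;
    match goal with IH : models _ _ ?a -> _, H : models _ _ ?a |- _ =>
      destruct (IH H) as [Hm' Hsub] end.
  all: split; [|apply subset_refl].
  all: try solve [constructor; unfold subset in *; firstorder eauto].
  all: eauto using models_fun_step, models_box_step.
Qed.

End Soundness.

Theorem theorem2 (Label Num Marker : Type)
  (G : Label -> absval Label Num Marker -> Prop)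
  (rh : absvar Label -> absval Label Num Marker -> Prop)
  (n : nat) (e e' : ex Label Num Marker) :
  models G rh e -> step n e e' -> models G rh e'.
Proof. intros He Hstep; exact (proj1 (step_models Hstep He)). Qed.
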